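(* For the population protocol USD and every $t\ge1$: (1) $\mathbb E_{t-1}[\psi_t]\le\psi_{t-1}\big(1-\frac1n\big)+\frac{\beta_{t-1}-\gamma_{t-1}}{n^2}$. (2) Conditioned on $\mathcal F_{t-1}$, $\psi_t-\mathbb E_{t-1}[\psi_t]$ satisfies the $\big(\frac{150}{n},\frac{150\beta_{t-1}}{n^2}\big)$-Bernstein condition.
   Context: Vertex set $V$, $|V|=n$; opinions in $\Sigma=[k]\cup\{\bot\}$ ($\bot$ = undecided). USD update rule: $\mathsf{update}(\sigma_1,\sigma_2)=\bot$ if $\sigma_1,\sigma_2\in[k]$ and $\sigma_1\ne\sigma_2$; $=\sigma_2$ if $\sigma_1=\bot$; $=\sigma_1$ otherwise. Population protocol USD: given $\mathrm{opn}_t\in\Sigma^V$, an ordered pair $(u,v)$ is chosen uniformly from $V\times V$ (with replacement), $\mathrm{opn}_{t+1}(u)=\mathsf{update}(\mathrm{opn}_t(u),\mathrm{opn}_t(v))$, and all other vertices keep their opinions. Notation: $\alpha_t(i)=|\{u:\mathrm{opn}_t(u)=i\}|/n$, $\beta_t=\sum_{i\in[k]}\alpha_t(i)$, $\gamma_t=\sum_{i\in[k]}\alpha_t(i)^2$, $\psi_t=\beta_t(2\beta_t-1)-\gamma_t$. $(\mathcal F_t)$ is the natural filtration; $\mathbb E_{t-1}$ is conditional expectation given $\mathcal F_{t-1}$. Bernstein condition: for $D,s\ge0$, $X$ satisfies the $(D,s)$-Bernstein condition if $\mathbb E[e^{\lambda X}]\le\exp\!\big(\frac{\lambda^2 s/2}{1-|\lambda|D/3}\big)$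 for all real $\lambda$ with $|\lambda|D<3$. Conditioned on $\mathcal F_{t-1}$: the same with $\mathbb E_{t-1}$, almost surely. *)

From HB Require Import structures.
From mathcomp Require Import all_boot all_order all_algebra.
From mathcomp Require Import reals.
From mathcomp Require Import sequences exp.
Set Implicit Arguments. Unset Strict Implicit. Unset Printing Implicit Defensive.
Import Order.TTheory GRing.Theory Num.Theory.
Local Open Scope ring_scope.

Section USD.
Variables (R : realType) (V : finType) (k : nat).

(* Opinions: Some i for i in [k], None for the undecided opinion bot. *)
Definition opinion := option 'I_k.
Definition config := V -> opinion.

Definition update (s1 s2 : opinion) : opinion :=
  match s1, s2 with
  | Some i, Some j => if i == j then s1 else None
  | None, _ => s2
  | Some _, None => s1
  end.

Definition step (c : config) (p : V * V) : config :=
  fun w => if w == p.1 then update (c p.1) (c p.2) else c w.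

Definition traj (c0 : config) (h : seq (V * V)) : config := foldl step c0 h.

Definition nV : R := #|V|%:R.

Definition alpha (c : config) (i : 'I_k) : R :=
  #|[pred u | c u == Some i]|%:R / nV.
Definition beta (c : config) : R := \sum_(i < k) alpha c i.
Definition gamma (c : config) : R := \sum_(i < k) alpha c i ^+ 2.
Definition psi (c : config) : R := beta c * (2 * beta c - 1) - gamma c.

(* Conditional expectation E_{t-1} given the history h = (pairs chosen at
   times 1..t-1): the t-th pair is uniform on V x V, independent of h. *)
Definition condE (f : V * V -> R) : R :=
  (nV ^+ 2)^-1 * \sum_(p : V * V) f p.

End USD.

Definition bernstein {R : realType} {T : Type} (E : (T -> R) -> R)
  (X : T -> R) (D s : R) : Prop :=
  forall lam : R, `|lam| * D < 3 ->
    E (fun w => expR (lam * X w)) <=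
    expR ((lam ^+ 2 * s / 2) / (1 - `|lam| * D / 3)).

From Pilot Require Import Defs.
From HB Require Import structures.
From mathcomp Require Import all_boot all_order all_algebra.
From mathcomp Require Import reals.
From mathcomp Require Import sequences exp.
From mathcomp Require Import ring lra.
From Stdlib Require Import FunctionalExtensionality.
Set Implicit Arguments. Unset Strict Implicit. Unset Printing Implicit Defensive.
Import Order.TTheory GRing.Theory Num.Theory.
Local Open Scope ring_scope.

(* One interaction changes [psi] only when the responder has an opinion [i]:
   an initiator with another opinion becomes undecided, or an undecided
   initiator adopts [i].  As [psi] is quadratic in the densities [alpha], the
   change is [-/+ slope / n + 1 / n^2] with [-1 <= slope <= 3].  Averaging over
   the [n^2] pairs gives the drift exactly, and it falls short of the claimed
   bound by [2 / n * \sum_i alpha_i (2 beta - 1 - alpha_i)^2 >= 0].  The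
   increment is at most [4 / n] in absolute value and has second moment at most
   [16 beta / n^2]; for such bounded variables [expR] is dominated by its
   second-order Taylor polynomial, which gives the Bernstein condition. *)

Lemma expR_le_1Dx_sqr (R : realType) (x : R) :
  `|x| <= 1/4 -> expR x <= 1 + x + x ^+ 2.
Proof.
rewrite ler_norml => /andP[hx1 hx2].
(* [expR (x / 2) * (1 - x / 2) <= 1] by [1 - x / 2 <= expR (- x / 2)]; square it. *)
have ex : expR x = expR (x / 2) ^+ 2 by rewrite -expRM_natr; congr expR; field.
have w_gt0 := expR_gt0 (x / 2).
have wz1 : expR (x / 2) * expR (- (x / 2)) = 1 by rewrite expRxMexpNx_1.
have z_ge := expR_ge1Dx (- (x / 2)).
rewrite ex; set w := expR (x / 2) in w_gt0 wz1 *; set z := expR _ in wz1 z_ge.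
have hw : 0 <= w * (1 - x / 2) <= 1 by apply/andP; split; nra.
have hw2 : (w * (1 - x / 2)) ^+ 2 <= 1.
  case/andP: hw => hw0 hw1.
  by rewrite expr2; have := ler_pM hw0 hw0 hw1 hw1; rewrite mulr1.
have hq : 0 < (1 - x / 2) ^+ 2 by apply: exprn_gt0; lra.
have hpoly : 1 <= (1 + x + x ^+ 2) * (1 - x / 2) ^+ 2.
  have -> : (1 + x + x ^+ 2) * (1 - x / 2) ^+ 2 =
            1 + x ^+ 2 * (1 - 3 * x + x ^+ 2) / 4 by field.
  have : 0 <= x ^+ 2 * (1 - 3 * x + x ^+ 2) by rewrite mulr_ge0 ?sqr_ge0 //; nra.
  lra.
by rewrite -(ler_pM2r hq) -exprMn; lra.
Qed.

Section USD.
Variables (R : realType) (V : finType) (k : nat).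
Hypothesis hV : (0 < #|V|)%N.

Local Notation n := (nV R V).
Local Notation E := (@condE R V).

Lemma nV_gt0 : 0 < n.
Proof. by rewrite /nV ltr0n. Qed.

Lemma nV_neq0 : n != 0.
Proof. by rewrite gt_eqF // nV_gt0. Qed.

Lemma sum_pair_const (x : R) : \sum_(p : V * V) x = x * n ^+ 2.
Proof. by rewrite sumr_const card_prod -mulr_natr natrM expr2. Qed.

Lemma condE_const (x : R) : E (fun=> x) = x.
Proof. by rewrite /condE sum_pair_const mulrC mulfK // expf_neq0 // nV_neq0. Qed.

Lemma condED (f g : V * V -> R) : E (fun p => f p + g p) = E f + E g.
Proof. by rewrite /condE big_split mulrDr. Qed.

Lemma condEB (f g : V * V -> R) : E (fun p => f p - g p) = E f - E g.
Proof. by rewrite /condE sumrB mulrBr. Qed.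

Lemma condEZ (a : R) (f : V * V -> R) : E (fun p => a * f p) = a * E f.
Proof. by rewrite /condE -mulr_sumr mulrCA. Qed.

Lemma ler_condE (f g : V * V -> R) : (forall p, f p <= g p) -> E f <= E g.
Proof.
by move=> fg; rewrite /condE ler_wpM2l ?ler_sum // invr_ge0 exprn_ge0 // ltW // nV_gt0.
Qed.

Lemma condE_centered (f : V * V -> R) : E (fun p => f p - E f) = 0.
Proof. by rewrite condEB condE_const subrr. Qed.

Lemma condE_sqr_centered_le (f : V * V -> R) :
  E (fun p => (f p - E f) ^+ 2) <= E (fun p => f p ^+ 2).
Proof.
set a := E f.
have -> : E (fun p => (f p - a) ^+ 2) = E (fun p => f p ^+ 2) - a ^+ 2.
  transitivity (E (fun p => f p ^+ 2 + ((- (2 * a)) * f p + a ^+ 2))).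
    by congr E; apply: functional_extensionality => p; ring.
  rewrite !condED condEZ condE_const -/a; ring.
by rewrite gerBl sqr_ge0.
Qed.

(* Where [|lam X| <= 1/4], [expR] is dominated by its second-order Taylor
   polynomial, so [E (expR (lam X)) <= 1 + lam^2 E X^2] for centred [X]. *)
Lemma bernstein_condE_bounded (f : V * V -> R) (b v D s : R) :
  (forall p, `|f p - E f| <= b) -> E (fun p => (f p - E f) ^+ 2) <= v ->
  12 * b <= D -> 2 * v <= s ->
  bernstein E (fun p => f p - E f) D s.
Proof.
move=> hb hv hD hs lam hlam.
have [u _] := card_gt0P hV.
have b0 : 0 <= b := le_trans (normr_ge0 _) (hb (u, u)).
have small p : `|lam * (f p - E f)| <= 1/4.
  have := hb p; have := normr_ge0 (f p - E f); have := normr_ge0 lam.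
  rewrite normrM; nra.
have v0 : 0 <= v.
  apply: le_trans hv; rewrite -(condE_const 0); apply: ler_condE => p.
  exact: sqr_ge0.
have hl : 0 <= lam ^+ 2 := sqr_ge0 lam.
have hq0 : 0 < 1 - `|lam| * D / 3 by lra.
have hq1 : 1 - `|lam| * D / 3 <= 1 by have := normr_ge0 lam; nra.
apply: (@le_trans _ _ (1 + lam ^+ 2 * v)).
  apply: (@le_trans _ _
    (E (fun p => 1 + lam * (f p - E f) + lam ^+ 2 * (f p - E f) ^+ 2))).
    by apply: ler_condE => p; rewrite -exprMn; apply: expR_le_1Dx_sqr.
  rewrite !condED !condEZ condE_centered condE_const mulr0 addr0.
  by rewrite lerD2l ler_wpM2l.
apply: (le_trans (expR_ge1Dx _)); rewrite ler_expR.
have hvq : v * (1 - `|lam| * D / 3) <= s / 2 by nra.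
by rewrite ler_pdivlMr // -[lam ^+ 2 * v * _]mulrA -[lam ^+ 2 * s / 2]mulrA ler_wpM2l.
Qed.

Local Notation m := (nV R V)^-1.
Local Notation alpha := (alpha R).
Local Notation beta := (beta R).
Local Notation gamma := (gamma R).
Local Notation psi := (psi R).
Implicit Types (c : config V k) (i j : 'I_k) (u v : V).

Definition ind c i u : R := if c u == Some i then 1 else 0.
Definition decided c u : R := if c u is Some _ then 1 else 0.

(* [loss c i] ([gain c i]) is the change of [psi] when one vertex of opinion [i]
   becomes undecided (when an undecided vertex adopts [i]). *)
Definition slope c i : R := 4 * beta c - 1 - 2 * alpha c i.
Definition loss c i : R := - slope c i * m + m ^+ 2.
Definition gain c i : R := slope c i * m + m ^+ 2.

Definition psi_incr c (p : V * V) : R :=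
  match c p.1, c p.2 with
  | Some x, Some y => if x == y then 0 else loss c x
  | None, Some y => gain c y
  | _, None => 0
  end.

Lemma sum_if_eq (F : 'I_k -> R) j : \sum_i (if i == j then F i else 0) = F j.
Proof. by rewrite -big_mkcond big_pred1_eq. Qed.

Lemma ind_Some {c u x} : c u = Some x -> forall i, ind c i u = if i == x then 1 else 0.
Proof.
by rewrite /ind => cu i; rewrite cu (inj_eq (@Some_inj _)) eq_sym; case: (i == x).
Qed.

Lemma ind_None {c u} : c u = None -> forall i, ind c i u = 0.
Proof. by rewrite /ind => cu i; rewrite cu. Qed.

Lemma sum_ind c i : \sum_u ind c i u = n * alpha c i.
Proof.
rewrite /alpha mulrC divfK ?nV_neq0 // -sum1_card natr_sum [RHS]big_mkcond /=.
by apply: eq_bigr => u _; rewrite /ind inE.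
Qed.

Lemma sum_ind_opinions c u : \sum_i ind c i u = decided c u.
Proof.
rewrite /decided; case cu: (c u) => [x|] /=.
  by rewrite -(sum_if_eq (fun=> 1) x); apply: eq_bigr => i _; rewrite (ind_Some cu).
by rewrite big1 // => i _; rewrite (ind_None cu).
Qed.

Lemma sum_decided c : \sum_u decided c u = n * beta c.
Proof.
under eq_bigr do rewrite -sum_ind_opinions.
by rewrite exchange_big /beta mulr_sumr; apply: eq_bigr => i _; rewrite sum_ind.
Qed.

Lemma alpha_ge0 c i : 0 <= alpha c i.
Proof. by rewrite /Defs.alpha divr_ge0 // /nV ler0n. Qed.

Lemma beta_ge0 c : 0 <= beta c.
Proof. by rewrite sumr_ge0 // => i _; apply: alpha_ge0. Qed.

Lemma alpha_le_beta c i : alpha c i <= beta c.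
Proof.
by rewrite /Defs.beta (bigD1 i) //= lerDl sumr_ge0 // => j _; apply: alpha_ge0.
Qed.

Lemma decided_le1 c u : decided c u <= 1.
Proof. by rewrite /decided; case: (c u). Qed.

Lemma beta_le1 c : beta c <= 1.
Proof.
rewrite -(ler_pM2l nV_gt0) mulr1 -sum_decided.
have -> : n = \sum_(u : V) 1 by rewrite sumr_const.
by apply: ler_sum => u _; apply: decided_le1.
Qed.

Lemma slope_bounds c i : -1 <= slope c i <= 3.
Proof.
have := alpha_ge0 c i; have := alpha_le_beta c i; have := beta_le1 c.
by rewrite /slope => *; apply/andP; split; lra.
Qed.

Lemma m_bounds : 0 < m <= 1.
Proof. by rewrite invr_gt0 nV_gt0 invf_le1 ?nV_gt0 // /nV ler1n. Qed.

Lemma alpha_step c u v i :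
  alpha (step c (u, v)) i =
  alpha c i + ((if update (c u) (c v) == Some i then 1 else 0) - ind c i u) * m.
Proof.
have alphaE c' : alpha c' i = (\sum_w ind c' i w) * m.
  by rewrite sum_ind mulrC mulKf ?nV_neq0.
rewrite !alphaE -mulrDl; congr (_ * _).
rewrite (bigD1 u) //= [in RHS](bigD1 u) //= {1}/ind /step /= eqxx.
have -> : \sum_(w | w != u) ind (step c (u, v)) i w = \sum_(w | w != u) ind c i w.
  by apply: eq_bigr => w wu; rewrite /ind /step /= (negbTE wu).
by rewrite [RHS]addrAC [ind c i u + _]addrC subrK.
Qed.

Lemma eq_psi c c' : (forall i, alpha c' i = alpha c i) -> psi c' = psi c.
Proof.
move=> h; rewrite /psi /Defs.beta /Defs.gamma.
by under eq_bigr do rewrite h; under [X in _ - X]eq_bigr do rewrite h.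
Qed.

Lemma psi_shift c c' j (d : R) :
  (forall i, alpha c' i = alpha c i + (if i == j then d else 0)) ->
  psi c' = psi c + d * slope c j + d ^+ 2.
Proof.
move=> h.
have hb : beta c' = beta c + d.
  by rewrite /Defs.beta; under eq_bigr do rewrite h; rewrite big_split /= sum_if_eq.
have hg : gamma c' = gamma c + (2 * alpha c j * d + d ^+ 2).
  rewrite /Defs.gamma; under eq_bigr do rewrite h.
  transitivity (\sum_i (alpha c i ^+ 2 +
      (if i == j then 2 * alpha c i * d + d ^+ 2 else 0))).
    by apply: eq_bigr => i _; case: (i == j); ring.
  by rewrite big_split /= sum_if_eq.
by rewrite /Defs.psi hb hg /slope; ring.
Qed.

Lemma psi_step c u v : psi (step c (u, v)) = psi c + psi_incr c (u, v).
Proof.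
rewrite /psi_incr /=; case cu: (c u) => [x|]; case cv: (c v) => [y|] /=.
- have [exy|xy] := eqVneq x y.
    subst y; rewrite addr0; apply: eq_psi => i.
    rewrite alpha_step cu cv /= eqxx (ind_Some cu) (inj_eq (@Some_inj _)) eq_sym.
    by case: (i == x); ring.
  rewrite (@psi_shift c _ x (- m)) /loss; first ring.
  move=> i; rewrite alpha_step cu cv /= (negbTE xy) (ind_Some cu).
  by case: (i == x) => /=; ring.
- rewrite addr0; apply: eq_psi => i.
  rewrite alpha_step cu cv /= (ind_Some cu) (inj_eq (@Some_inj _)) eq_sym.
  by case: (i == x); ring.
- rewrite (@psi_shift c _ y m) /gain; first ring.
  move=> i; rewrite alpha_step cu cv /= (ind_None cu) (inj_eq (@Some_inj _)) eq_sym.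
  by case: (i == y); ring.
- rewrite addr0; apply: eq_psi => i.
  by rewrite alpha_step cu cv /= (ind_None cu); ring.
Qed.

Lemma decided_Some {c u x} : c u = Some x -> decided c u = 1.
Proof. by rewrite /decided => ->. Qed.

Lemma decided_None {c u} : c u = None -> decided c u = 0.
Proof. by rewrite /decided => ->. Qed.

(* The indicator form makes [psi_incr] summable over all pairs. *)
Lemma psi_incrE c u v :
  psi_incr c (u, v) = \sum_i (ind c i u * (decided c v - ind c i v) * loss c i
                             + (1 - decided c u) * ind c i v * gain c i).
Proof.
rewrite /psi_incr /=; case cu: (c u) => [x|]; case cv: (c v) => [y|] /=;
  rewrite ?(decided_Some cu) ?(decided_None cu) ?(decided_Some cv) ?(decided_None cv).
- have [exy|xy] := eqVneq x y.
    subst y; rewrite big1 // => i _; rewrite (ind_Some cu) (ind_Some cv).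
    by case: (i == x); ring.
  rewrite -(sum_if_eq (loss c) x); apply: eq_bigr => i _.
  rewrite (ind_Some cu) (ind_Some cv).
  by have [->|ix] := eqVneq i x; rewrite ?(negbTE xy); ring.
- by rewrite big1 // => i _; rewrite (ind_None cv); ring.
- rewrite -(sum_if_eq (gain c) y); apply: eq_bigr => i _.
  by rewrite (ind_None cu) (ind_Some cv); case: (i == y); ring.
- by rewrite big1 // => i _; rewrite (ind_None cu) (ind_None cv); ring.
Qed.

Lemma sum_psi_incr c :
  \sum_(p : V * V) psi_incr c p = n ^+ 2 * \sum_i
    (alpha c i * (beta c - alpha c i) * loss c i + (1 - beta c) * alpha c i * gain c i).
Proof.
transitivity (\sum_u \sum_v psi_incr c (u, v)); first by rewrite pair_bigA.
under eq_bigr do under eq_bigr do rewrite psi_incrE.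
under eq_bigr do rewrite exchange_big.
rewrite exchange_big mulr_sumr; apply: eq_bigr => i _.
set L := loss c i; set G := gain c i.
have inner u : \sum_v (ind c i u * (decided c v - ind c i v) * L
                        + (1 - decided c u) * ind c i v * G) =
    L * (n * beta c - n * alpha c i) * ind c i u
    + G * (n * alpha c i) * (1 - decided c u).
  transitivity (\sum_v (ind c i u * L * (decided c v - ind c i v)
                         + (1 - decided c u) * G * ind c i v)).
    by apply: eq_bigr => v _; ring.
  by rewrite big_split /= -!mulr_sumr sumrB sum_decided sum_ind; ring.
under eq_bigr do rewrite inner.
rewrite big_split /= -!mulr_sumr sumrB sum_ind sum_decided sumr_const -mulr_natr.
rewrite /nV; ring.
Qed.

Lemma psi_stepE c : (fun p => psi (step c p)) = (fun p => psi c + psi_incr c p).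
Proof. by apply: functional_extensionality => -[u v]; rewrite psi_step. Qed.

Lemma psiE c : psi c = \sum_i alpha c i * (2 * beta c - 1 - alpha c i).
Proof.
rewrite /Defs.psi {1}/Defs.beta /Defs.gamma mulr_suml -sumrB.
by apply: eq_bigr => i _; ring.
Qed.

Lemma condE_psi_step c :
  E (fun p => psi (step c p)) =
  psi c * (1 - m) + m ^+ 2 * (beta c - gamma c)
  - 2 * m * \sum_i alpha c i * (2 * beta c - 1 - alpha c i) ^+ 2.
Proof.
rewrite psi_stepE condED condE_const /condE sum_psi_incr.
rewrite mulKf ?expf_neq0 ?nV_neq0 //.
transitivity (psi c + \sum_i (- m * (alpha c i * (2 * beta c - 1 - alpha c i))
    + m ^+ 2 * (alpha c i - alpha c i ^+ 2)
    - 2 * m * (alpha c i * (2 * beta c - 1 - alpha c i) ^+ 2))).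
  by congr (_ + _); apply: eq_bigr => i _; rewrite /loss /gain /slope; ring.
rewrite sumrB big_split /= -!mulr_sumr sumrB -psiE.
by rewrite -[\sum_i alpha c i]/(beta c) -[\sum_i alpha c i ^+ 2]/(gamma c); ring.
Qed.

Lemma condE_psi_step_le c :
  E (fun p => psi (step c p)) <= psi c * (1 - m) + (beta c - gamma c) / n ^+ 2.
Proof.
case/andP: m_bounds => m0 _.
rewrite condE_psi_step -exprVn [_ * (beta c - gamma c)]mulrC gerBl.
have hsum : 0 <= \sum_i alpha c i * (2 * beta c - 1 - alpha c i) ^+ 2.
  by apply: sumr_ge0 => i _; rewrite mulr_ge0 ?sqr_ge0 ?alpha_ge0.
by rewrite mulr_ge0 // mulr_ge0 // ltW.
Qed.

Lemma norm_loss_le c i : `|loss c i| <= 4 * m.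
Proof.
case/andP: (slope_bounds c i) => s1 s3; case/andP: m_bounds => m0 m1.
rewrite /loss ler_norml; apply/andP; split; nra.
Qed.

Lemma norm_gain_le c i : `|gain c i| <= 4 * m.
Proof.
case/andP: (slope_bounds c i) => s1 s3; case/andP: m_bounds => m0 m1.
rewrite /gain ler_norml; apply/andP; split; nra.
Qed.

Lemma norm_psi_incr_le c u v : `|psi_incr c (u, v)| <= 4 * m * decided c v.
Proof.
have m0 : 0 <= 4 * m by case/andP: m_bounds => m0 _; rewrite mulr_ge0 // ltW.
rewrite /psi_incr /decided /=; case: (c u) => [x|]; case: (c v) => [y|];
  rewrite ?mulr1 ?mulr0 ?normr0 ?norm_gain_le //.
by case: (x == y); rewrite ?normr0 ?norm_loss_le.
Qed.

Lemma condE_decided c : E (fun p => decided c p.2) = beta c.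
Proof.
rewrite /condE -[\sum_p _](pair_bigA _ (fun _ v => decided c v)) /=.
under eq_bigr do rewrite sum_decided.
rewrite sumr_const -mulr_natr [#|_|%:R]/n -exprVn.
by field; apply: nV_neq0.
Qed.

Lemma psi_incr_bounds c p : - (4 * m) <= psi_incr c p <= 4 * m.
Proof.
case: p => u v; rewrite -ler_norml (le_trans (norm_psi_incr_le c u v)) //.
case/andP: m_bounds => m0 _.
by rewrite ler_piMr ?decided_le1 // mulr_ge0 // ltW.
Qed.

Lemma condE_psi_incr_sqr_le c :
  E (fun p => psi_incr c p ^+ 2) <= 16 * m ^+ 2 * beta c.
Proof.
rewrite -condE_decided -condEZ; apply: ler_condE => -[u v] /=.
have := norm_psi_incr_le c u v; rewrite ler_norml /decided.
by case: (c v) => [y|]; rewrite ?mulr1 ?mulr0 => /andP[h1 h2]; nra.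
Qed.

Lemma bernstein_psi_step c :
  bernstein E (fun p => psi (step c p) - E (fun p => psi (step c p)))
    (150 / n) (150 * beta c / n ^+ 2).
Proof.
have -> : (fun p => psi (step c p) - E (fun p => psi (step c p)))
          = (fun p => psi_incr c p - E (psi_incr c)).
  apply: functional_extensionality => -[u v].
  by rewrite psi_stepE condED condE_const psi_step; ring.
case/andP: m_bounds => m0 _.
apply: (bernstein_condE_bounded (b := 8 * m) (v := 16 * m ^+ 2 * beta c)).
- have hE : - (4 * m) <= E (psi_incr c) <= 4 * m.
    apply/andP; split;
      [rewrite -(condE_const (- (4 * m))) | rewrite -(condE_const (4 * m))];
      by apply: ler_condE => p; case/andP: (psi_incr_bounds c p).
  move=> p; case/andP: (psi_incr_bounds c p) => h1 h2; case/andP: hE => h3 h4.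
  by rewrite ler_norml; apply/andP; split; lra.
- exact: le_trans (condE_sqr_centered_le (psi_incr c)) (condE_psi_incr_sqr_le c).
- by rewrite mulrA; lra.
- have := beta_ge0 c; rewrite -exprVn => hb.
  have : 0 <= m ^+ 2 * beta c by rewrite mulr_ge0 ?sqr_ge0.
  by rewrite mulrAC; lra.
Qed.

End USD.

Theorem mainTheorem14 (R : realType) (V : finType) (k : nat)
  (hV : (0 < #|V|)%N) (c0 : config V k) (t : nat) (ht : (1 <= t)%N)
  (h : seq (V * V)) (hh : size h = t.-1) :
  let n : R := nV R V in
  let c := traj c0 h in
  let psi_t := fun p : V * V => psi R (traj c0 (rcons h p)) in
  let Et := @condE R V psi_t in
  Et <= psi R c * (1 - n^-1) + (beta R c - gamma R c) / n ^+ 2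
  /\ bernstein (@condE R V) (fun p => psi_t p - Et)
       (150 / n) (150 * beta R c / n ^+ 2).
Proof.
move=> n c psi_t Et; rewrite {}/Et.
have -> : psi_t = fun p => psi R (step c p).
  by apply: functional_extensionality => p; rewrite /psi_t /traj foldl_rcons.
split; first exact (condE_psi_step_le R hV c).
exact (bernstein_psi_step hV c).
Qed.
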